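(* Consider an infinite execution $\gamma_0\gamma_1\ldots$ of the unison dynamics with $\gamma_0$ satisfying $WU_0$, in which every process increments its clock infinitely often, and let $\bot_0$, $\widetilde{p^t.r}$, $t_{p,k}$ and $C_k$ be as in the context. Then for every integer $k\ge \bot_0+D$, $C_k$ is a well-defined coherent cut.
   Context: Let $G=(V,E)$ be a finite connected undirected graph, $|V|=n\ge 2$, $\mathcal N_p$ the set of neighbors of $p$, $d(p,q)$ the hop distance, $D$ the diameter, and $V(p,r)=\{q\in V: d(p,q)\le r\}$. Fix an integer $M\ge 3$; for an integer $a$, $\bar a\in\{0,\dots,M-1\}$ denotes its residue modulo $M$. Each process $p$ holds a clock $p.r\in\{0,\dots,M-1\}$; $p^t.r$ denotes its value in configuration $\gamma_t$. Integers $a,b$ are locally comparable if $\min(\overline{a-b},\overline{b-a})\le 1$, and then $b\ominus a=\overline{b-a}$ if $\overline{b-a}\le 1$, and $b\ominus a=-\overline{a-b}$ otherwise. A configuration satisfies $WU$ if for every edge $\{p,q\}$, $p.r$ and $q.r$ are locally comparable. The delay of a path $\mu=p_0p_1\ldots p_k$ is $\delta_\mu=\sum_{i=0}^{k-1}(p_{i+1}.r\ominus p_i.r)$ ($0$ if $k=0$). A configuration satisfies $WU_0$ if it satisfies $WU$ and the delay is intrinsic: for all $p,q$, all paths from $p$ to $q$ have the same delay, denoted $\delta_{(p,q)}$ ($\delta^t_{(p,q)}$ in $\gamma_t$). Dynamics: a process $p$ is enabled iff for every $q\in\mathcal N_p$, $q.r=p.r$ or $q.r=\overline{p.r+1}$.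 In a transition $\gamma_t\to\gamma_{t+1}$ a nonempty set of processes enabled in $\gamma_t$ is chosen (by an arbitrary, possibly unfair, daemon) and each of them sets $p.r:=\overline{p.r+1}$; other clocks are unchanged. Events: $(p,0)$ is an event for every $p$; $(p,t+1)$ is an event iff $p$ increments in $\gamma_t\to\gamma_{t+1}$. Causal relation $\leadsto$: for an event $(p,t)$ with $t>0$, $(p,t')\leadsto(p,t)$ where $t'$ is the largest time $<t$ such that $(p,t')$ is an event, and for each $q\in\mathcal N_p$, $(q,t')\leadsto(p,t)$ where $t'$ is the largest time $<t$ such that $(q,t')$ is an event. $\preceq$ is the reflexive–transitive closure of $\leadsto$. Lifting: assume $\gamma_0$ satisfies $WU_0$. Choose $p_0$ with $\delta^0_{(p_0,q)}\ge 0$ for all $q\in V$, and let $\bot_0=p_0^0.r$. Define integers $\widetilde{p^t.r}$ by $\widetilde{p^0.r}=\bot_0+\delta^0_{(p_0,p)}$, and $\widetilde{p^{t+1}.r}=\widetilde{p^t.r}+1$ if $p$ increments in $\gamma_t\to\gamma_{t+1}$, $\widetilde{p^{t+1}.r}=\widetilde{p^t.r}$ otherwise. For an integer $k$, $t_{p,k}$ is the smallest $t$ with $\widetilde{p^t.r}=k$, and $C_k=\{(p,t_{p,k}):p\in V\}$. A cut is a map $C:p\mapsto t^C_p$ (identified with the set $\{(p,t^C_p)\}$) such that each $(p,t^C_p)$ is an event. A cut $C$ is coherent if whenever $(q,t')\preceq(p,t)\preceq(p,t^C_p)$, then $(q,t')\preceq(q,t^C_q)$. *)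

From HB Require Import structures.
From mathcomp Require Import all_boot all_order all_algebra.
From Stdlib Require Import Relations.
Set Implicit Arguments. Unset Strict Implicit. Unset Printing Implicit Defensive.
Import Order.TTheory GRing.Theory Num.Theory.
Local Open Scope ring_scope.

Definition resid (M : nat) (a : int) : int := (a %% M%:Z)%Z.

Definition loc_comp (M : nat) (a b : int) : bool :=
  Num.min (resid M (a - b)) (resid M (b - a)) <= 1.

Definition ominus (M : nat) (b a : int) : int :=
  if resid M (b - a) <= 1 then resid M (b - a) else - resid M (a - b).

Section Defs.
Variables (V : finType) (e : rel V) (M : nat).

Definition WU (c : V -> nat) : Prop :=
  forall p q, e p q -> loc_comp M (c p)%:Z (c q)%:Z.

Fixpoint delay (c : V -> nat) (x : V) (s : seq V) : int :=
  match s with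
  | [::] => 0
  | y :: s' => ominus M (c y)%:Z (c x)%:Z + delay c y s'
  end.

Definition intrinsic_delay (c : V -> nat) : Prop :=
  forall p s1 s2, path e p s1 -> path e p s2 -> last p s1 = last p s2 ->
    delay c p s1 = delay c p s2.

Definition WU0 (c : V -> nat) : Prop := WU c /\ intrinsic_delay c.

Definition delta_spec (c : V -> nat) (delta : V -> V -> int) : Prop :=
  forall p s, path e p s -> delay c p s = delta p (last p s).

Definition enabled (c : V -> nat) (p : V) : Prop :=
  forall q, e p q -> c q = c p \/ c q = ((c p).+1 %% M)%N.

(* S t = set of processes chosen by the daemon in gamma_t -> gamma_{t+1} *)
Definition execution (gamma : nat -> V -> nat) (S : nat -> {set V}) : Prop :=
  forall t, [/\ S t != set0,
               (forall p, p \in S t -> enabled (gamma t) p) &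
               (forall p, gamma t.+1 p =
                  if p \in S t then ((gamma t p).+1 %% M)%N else gamma t p)].

Definition fair (S : nat -> {set V}) : Prop :=
  forall p t, exists t', (t <= t')%N /\ p \in S t'.

Definition is_event (S : nat -> {set V}) (p : V) (t : nat) : Prop :=
  t = 0%N \/ exists t0, t = t0.+1 /\ p \in S t0.

Definition last_event_before (S : nat -> {set V}) (q : V) (t t' : nat) : Prop :=
  [/\ (t' < t)%N, is_event S q t' &
      forall t'', (t' < t'')%N -> (t'' < t)%N -> ~ is_event S q t''].

Definition leadsto (S : nat -> {set V}) (x y : V * nat) : Prop :=
  let (q, t') := x in let (p, t) := y in
  [/\ is_event S p t, (0 < t)%N, (q = p \/ e p q) & last_event_before S q t t'].

Definition causal (S : nat -> {set V}) : relation (V * nat) :=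
  clos_refl_trans (V * nat) (leadsto S).

Definition is_cut (S : nat -> {set V}) (C : V -> nat) : Prop :=
  forall p, is_event S p (C p).

Definition coherent (S : nat -> {set V}) (C : V -> nat) : Prop :=
  forall q t' p t, causal S (q, t') (p, t) -> causal S (p, t) (p, C p) ->
    causal S (q, t') (q, C q).

(* lifted clocks: lifted_clock S base t p = widetilde{p^t.r} with widetilde{p^0.r} = base p *)
Fixpoint lifted_clock (S : nat -> {set V}) (base : V -> int) (t : nat) (p : V) : int :=
  match t with
  | 0%N => base p
  | t'.+1 => lifted_clock S base t' p + (if p \in S t' then 1 else 0)
  end.

Definition is_dist (p q : V) (n : nat) : Prop :=
  (exists s, [/\ path e p s, last p s = q & size s = n]) /\
  (forall s, path e p s -> last p s = q -> (n <= size s)%N).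

Definition is_diameter (D : nat) : Prop :=
  (forall p q n, is_dist p q n -> (n <= D)%N) /\ exists p q, is_dist p q D.

End Defs.

From HB Require Import structures.
From mathcomp Require Import all_boot all_order all_algebra.
From mathcomp Require Import ring zify.
From Stdlib Require Import Relation_Operators.
Set Implicit Arguments. Unset Strict Implicit. Unset Printing Implicit Defensive.
Import Order.TTheory GRing.Theory Num.Theory.
Local Open Scope ring_scope.

(* The proof works with the lifted clocks L t p = widetilde{p^t.r}.
   1. The initial lift is L 0 p = bot_0 + delta(p0,p).  Since a delay is
      congruent to the difference of the end clocks and each edge
      contributes at most 1, L 0 p is congruent to p^0.r modulo M, and
      L 0 q <= L 0 p + 1 along every edge ("smoothness"); moreover
      L 0 p <= bot_0 + D, because delta(p0,p) is at most the length of a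
      shortest path.
   2. Both properties are invariant along the execution: a process that is
      one lifted unit ahead of a neighbour is never enabled (this is where
      M >= 3 is used).
   3. Smoothness makes the lifted clock monotone along the causal order.
   4. By fairness every lifted clock runs from L 0 p <= k through all
      larger integers, so its first hitting time of k exists; these first
      hitting times form a cut, and monotonicity along causality shows that
      the cut is coherent. *)

Section ModularArithmetic.
Variable M : nat.
Hypothesis M_gt0 : (0 < M)%N.

Lemma dvdz_sub_modz (x : int) : (M%:Z %| x - (x %% M%:Z)%Z)%Z.
Proof. by rewrite {1}(divz_eq x M%:Z) addrK dvdz_mull. Qed.

Lemma dvdz_small_absurd (j : nat) : (M%:Z %| j%:Z)%Z -> (0 < j < M)%N -> False.
Proof.
by rewrite dvdzE => /dvdn_leq H /andP[/H]; rewrite leqNgt => /negbTE ->.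
Qed.

Lemma ominus_le1 (b a : int) : ominus M b a <= 1.
Proof.
rewrite /ominus; case: ifP => // _; apply: (@le_trans _ _ 0) => //.
by rewrite oppr_le0 modz_ge0 // eqz_nat -lt0n.
Qed.

Lemma dvdz_ominus (b a : int) : (M%:Z %| ominus M b a - (b - a))%Z.
Proof.
rewrite /ominus /resid; case: ifP => _.
  by rewrite -opprB rpredN dvdz_sub_modz.
have -> : - ((a - b) %% M%:Z)%Z - (b - a) = (a - b) - ((a - b) %% M%:Z)%Z.
  by ring.
exact: dvdz_sub_modz.
Qed.

End ModularArithmetic.

Section Delays.
Variables (V : finType) (M : nat) (c : V -> nat).
Hypothesis M_gt0 : (0 < M)%N.

Lemma delay_le_size (x : V) (s : seq V) : delay M c x s <= (size s)%:Z.
Proof.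
elim: s x => //= y s IH x.
by rewrite -addn1 PoszD addrC lerD // ominus_le1.
Qed.

Lemma delay_cat (x : V) (s1 s2 : seq V) :
  delay M c x (s1 ++ s2) = delay M c x s1 + delay M c (last x s1) s2.
Proof. by elim: s1 x => [|y s1 IH] x /=; rewrite ?add0r // IH addrA. Qed.

Lemma dvdz_delay (x : V) (s : seq V) :
  (M%:Z %| delay M c x s - ((c (last x s))%:Z - (c x)%:Z))%Z.
Proof.
elim: s x => [|y s IH] x /=; first by rewrite subrr subr0.
have -> : ominus M (c y)%:Z (c x)%:Z + delay M c y s
            - ((c (last y s))%:Z - (c x)%:Z)
          = (ominus M (c y)%:Z (c x)%:Z - ((c y)%:Z - (c x)%:Z))
            + (delay M c y s - ((c (last y s))%:Z - (c y)%:Z)) by ring.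
by rewrite rpredD ?dvdz_ominus.
Qed.

End Delays.

Section ShortestPaths.
Variables (V : finType) (e : rel V).

Lemma shortest_path (x : V) (s : seq V) : path e x s ->
  exists s', [/\ path e x s', last x s' = last x s & is_dist e x (last x s) (size s')].
Proof.
move=> xs.
pose has_path n := [exists t : n.-tuple V, path e x t && (last x t == last x s)].
have has_s : has_path (size s) by apply/existsP; exists (in_tuple s); rewrite /= xs eqxx.
case: (ex_minnP (ex_intro has_path _ has_s)) => n /existsP[t /andP[xt /eqP tl]] tmin.
exists t; rewrite size_tuple; split=> //; split; first by exists t; rewrite size_tuple.
move=> s' xs' s'l; apply: tmin; apply/existsP; exists (in_tuple s').
by rewrite /= xs' s'l eqxx.
Qed.

End ShortestPaths.

Section IntrinsicDelay.
Variables (V : finType) (e : rel V) (M : nat) (c : V -> nat) (delta : V -> V -> int).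
Hypotheses (M_gt0 : (0 < M)%N) (delta_ok : delta_spec e M c delta).

Lemma delta_le_diameter (D : nat) (x y : V) :
  is_diameter e D -> connect e x y -> delta x y <= D%:Z.
Proof.
move=> [diam _] /connectP[s xs ->].
have [s' [xs' <- dist_s']] := shortest_path xs.
rewrite -delta_ok //; apply: le_trans (delay_le_size c M_gt0 x s') _.
by rewrite lez_nat; apply: diam dist_s'.
Qed.

Lemma dvdz_delta (x y : V) : connect e x y ->
  (M%:Z %| delta x y - ((c y)%:Z - (c x)%:Z))%Z.
Proof. by move=> /connectP[s xs ->]; rewrite -delta_ok // dvdz_delay. Qed.

Lemma delta_edge (x p q : V) : connect e x p -> e p q -> delta x q <= delta x p + 1.
Proof.
move=> /connectP[s xs ->] pq.
have xsq : path e x (s ++ [:: q]) by rewrite cat_path xs /= pq.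
have -> : delta x q = delay M c x (s ++ [:: q]) by rewrite delta_ok // last_cat.
by rewrite delay_cat -delta_ok //= addr0 lerD2l ominus_le1.
Qed.

End IntrinsicDelay.

Section Events.
Variables (V : finType) (e : rel V) (S : nat -> {set V}).

Definition eventb (p : V) (t : nat) : bool := (t == 0%N) || (p \in S t.-1).

Lemma is_eventP (p : V) (t : nat) : reflect (is_event S p t) (eventb p t).
Proof.
rewrite /eventb; case: t => [|t] /=; first by left; left.
apply: (iffP idP) => [p_in|[// | [t0 [[->] //]]]].
by right; exists t.
Qed.

Lemma last_event_exists (q : V) (a b : nat) : is_event S q a -> (a < b)%N ->
  exists2 b', (a <= b')%N & last_event_before S q b b'.
Proof.
move=> /is_eventP ev_a ab.
have ex : exists u, (u < b)%N && eventb q u by exists a; rewrite ab.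
have bound u : (u < b)%N && eventb q u -> (u <= b)%N by case/andP=> /ltnW.
case: (ex_maxnP ex bound) => b' /andP[b'b /is_eventP ev_b'] b'max.
exists b'; first by apply: b'max; rewrite ab.
split=> // u b'u ub /is_eventP ev_u.
by have := b'max u; rewrite ub ev_u leqNgt b'u => /(_ isT).
Qed.

Lemma causal_same_process (q : V) (a b : nat) :
  is_event S q a -> (a <= b)%N -> is_event S q b -> causal e S (q, a) (q, b).
Proof.
move=> ev_a; elim/ltn_ind: b => b IH ab ev_b.
case: (ltngtP a b) ab => // [a_lt_b _|-> _]; last exact: rt_refl.
have [b' ab' last_b'] := last_event_exists ev_a a_lt_b.
have [b'b ev_b' _] := last_b'.
apply: rt_trans (IH b' b'b ab' ev_b') (rt_step _ _ _ _ _).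
by split=> //; [exact: leq_ltn_trans a_lt_b | left].
Qed.

Lemma causal_event (x y : V * nat) :
  causal e S x y -> is_event S y.1 y.2 -> is_event S x.1 x.2.
Proof.
elim=> {x y} [[q t'] [p t] [_ _ _ []] | // | x y z _ IHxy _ IHyz] //.
by move=> /IHyz /IHxy.
Qed.

End Events.

Section LiftedClocks.
Variables (V : finType) (S : nat -> {set V}) (base : V -> int).
Local Notation L := (lifted_clock S base).

Lemma lifted_clockS (t : nat) (p : V) :
  L t.+1 p = L t p + (if p \in S t then 1 else 0).
Proof. by []. Qed.

Lemma lifted_clock_mono (p : V) (u v : nat) : (u <= v)%N -> L u p <= L v p.
Proof.
move/subnK=> <-; elim: (v - u)%N => [|n IH] //.
by rewrite addSn lifted_clockS (le_trans IH) // lerDl; case: ifP.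
Qed.

Lemma lifted_clock_step_le (t : nat) (p : V) : L t.+1 p <= L t p + 1.
Proof. by rewrite lifted_clockS lerD2l; case: ifP. Qed.

Lemma lifted_clock_ivt (p : V) (m : int) (b : nat) :
  L 0 p <= m -> m <= L b p -> exists t, L t p = m.
Proof.
elim: b => [|b IH] m_ge m_le; first by exists 0%N; apply/le_anti/andP.
have [m_le_b | b_lt_m] := lerP m (L b p); first exact: IH.
exists b.+1; apply/le_anti; rewrite m_le andbT.
by apply: le_trans (lifted_clock_step_le b p) _; rewrite lezD1.
Qed.

Hypothesis fairS : fair S.

Lemma lifted_clock_unbounded (p : V) (n : nat) : exists b, L 0 p + n%:Z <= L b p.
Proof.
elim: n => [|n [b Hb]]; first by exists 0%N; rewrite addr0.
have [t [bt p_in]] := fairS p b.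
exists t.+1; rewrite lifted_clockS p_in -addn1 PoszD addrA lerD2r.
exact: le_trans Hb (lifted_clock_mono p bt).
Qed.

Lemma lifted_clock_reaches (p : V) (k : int) : L 0 p <= k -> exists t, L t p = k.
Proof.
move=> k_ge; have [b Hb] := lifted_clock_unbounded p `|k - L 0 p|%N.
apply: (lifted_clock_ivt k_ge); apply: le_trans Hb.
by rewrite gez0_abs ?subr_ge0 // subrKC.
Qed.

Definition first_hit (k : int) (C : V -> nat) : Prop :=
  forall p, L (C p) p = k /\ (forall t, L t p = k -> (C p <= t)%N).

Lemma first_hit_exists (k : int) :
  (forall p, exists t, L t p = k) -> exists C, first_hit k C.
Proof.
move=> reach; have reachb p : exists t, L t p == k.
  by have [t Ht] := reach p; exists t; apply/eqP.
exists (fun p => ex_minn (reachb p)) => p.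
by case: ex_minnP => t /eqP Ht tmin; split=> // u /eqP; apply: tmin.
Qed.

(* First hitting times are events: just before C p the clock was below k,
   so p incremented at step C p - 1. *)
Lemma first_hit_cut (k : int) (C : V -> nat) : first_hit k C -> is_cut S C.
Proof.
move=> hit p; apply/is_eventP; have [hit_k hit_min] := hit p.
case E: (C p) hit_k => [|m] //; rewrite lifted_clockS /eventb /=.
case: ifP => // _; rewrite addr0 => /hit_min.
by rewrite E ltnn.
Qed.

End LiftedClocks.

Section CausalMonotonicity.
Variables (V : finType) (e : rel V) (S : nat -> {set V}) (base : V -> int).
Local Notation L := (lifted_clock S base).

Definition smooth (t : nat) : Prop := forall p q, e p q -> L t q <= L t p + 1.

Hypothesis smooth_all : forall t, smooth t.

(* A direct causal predecessor has a lifted clock at most that of the event: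
   a neighbour's clock lags the incrementing process by at most one unit. *)
Lemma leadsto_lifted_le (q p : V) (t' t : nat) :
  leadsto e S (q, t') (p, t) -> L t' q <= L t p.
Proof.
case=> /is_eventP ev_t t_gt0 [<- | pq] [t't _ _]; first exact/lifted_clock_mono/ltnW.
case: t ev_t t_gt0 t't => // t1; rewrite /eventb /= => p_in _ t't1.
rewrite p_in (le_trans (lifted_clock_mono S base q (t't1 : (t' <= t1)%N))) //.
exact: smooth_all.
Qed.

Lemma causal_lifted_le (x y : V * nat) : causal e S x y -> L x.2 x.1 <= L y.2 y.1.
Proof.
elim=> {x y} [[q t'] [p t] /leadsto_lifted_le // | // | x y z _ xy _ yz].
exact: le_trans xy yz.
Qed.

(* The first hitting times of any level k form a coherent cut: a causal
   predecessor (q, t') of (p, C p) has lifted clock at most k, so it cannot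
   come after the first time q reaches k. *)
Lemma first_hit_coherent (k : int) (C : V -> nat) :
  first_hit S base k C -> coherent e S C.
Proof.
move=> hit q t' p t qp pC.
have q_to_Cp := rt_trans _ _ _ _ _ qp pC.
have ev_t' : is_event S q t' := causal_event q_to_Cp (first_hit_cut hit p).
have [hit_q _] := hit q; have [hit_p _] := hit p.
have le_k : L t' q <= k by rewrite -hit_p; exact: (causal_lifted_le q_to_Cp).
apply: causal_same_process => //; last exact: first_hit_cut hit q.
rewrite leqNgt; apply/negP => Cq_lt.
case: ev_t' => [t'0 | [u [t'u q_in]]]; first by rewrite t'0 in Cq_lt.
rewrite t'u lifted_clockS q_in in Cq_lt le_k.
have := lifted_clock_mono S base q (Cq_lt : (C q <= u)%N); rewrite hit_q.
lia.
Qed.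

End CausalMonotonicity.

Section Invariant.
Variables (V : finType) (e : rel V) (M : nat).
Variables (gamma : nat -> V -> nat) (S : nat -> {set V}) (base : V -> int).
Hypotheses (M_ge3 : (3 <= M)%N) (e_sym : symmetric e).
Hypothesis exec : execution e M gamma S.
Local Notation L := (lifted_clock S base).

Definition lifts (t : nat) : Prop := forall p, (M%:Z %| L t p - (gamma t p)%:Z)%Z.

Lemma lifts_step (t : nat) : lifts t -> lifts t.+1.
Proof.
move=> lift p; have [_ _ upd] := exec t; rewrite lifted_clockS upd.
case: ifP => _; last by rewrite addr0.
rewrite -modz_nat -addn1 PoszD; set g := (gamma t p)%:Z.
have -> : L t p + 1 - ((g + 1) %% M%:Z)%Z
          = (L t p - g) + ((g + 1) - ((g + 1) %% M%:Z)%Z) by ring.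
by rewrite rpredD ?dvdz_sub_modz.
Qed.

(* An enabled process is never one lifted unit ahead of a neighbour: the
   neighbour's clock equals its own or its successor modulo M, which would
   force M to divide 1 or 2. *)
Lemma enabled_not_ahead (t : nat) (p q : V) : lifts t -> e q p ->
  enabled e M (gamma t) q -> L t q <> L t p + 1.
Proof.
move=> lift qp /(_ p qp) gp_eq ahead.
have lag := rpredB (lift q) (lift p); rewrite ahead in lag.
set gp := (gamma t p)%:Z in lag; set gq := (gamma t q)%:Z in lag.
case: gp_eq => gp_eq.
- apply: (@dvdz_small_absurd M 1); last exact: leq_trans M_ge3.
  have <- : L t p + 1 - gq - (L t p - gp) = 1%N%:Z by rewrite /gp gp_eq; ring.
  exact: lag.
- have succ : (M%:Z %| (gq + 1) - gp)%Z.
    by rewrite /gp gp_eq -modz_nat -addn1 PoszD dvdz_sub_modz.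
  apply: (@dvdz_small_absurd M 2) => //.
  have <- : L t p + 1 - gq - (L t p - gp) + (gq + 1 - gp) = 2%N%:Z by ring.
  exact: rpredD.
Qed.

Lemma smooth_step (t : nat) : lifts t -> smooth e S base t -> smooth e S base t.+1.
Proof.
move=> lift sm p q pq; have [_ en _] := exec t; rewrite !lifted_clockS.
have qp : e q p by rewrite e_sym.
have := sm p q pq; have ahead := enabled_not_ahead lift qp.
case: (p \in S t); case q_in: (q \in S t) => sm_pq; try lia.
by have := ahead (en q q_in); lia.
Qed.

Lemma smooth_invariant : lifts 0 -> smooth e S base 0 -> forall t, smooth e S base t.
Proof.
move=> lift0 sm0 t; suff [] : lifts t /\ smooth e S base t by [].
elim: t => [|t [lt st]]; first by split.
by split; [exact: lifts_step | exact: smooth_step].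
Qed.

End Invariant.

Theorem lemma2 (V : finType) (e : rel V) (M : nat)
    (gamma : nat -> V -> nat) (S : nat -> {set V})
    (delta0 : V -> V -> int) (p0 : V) (D : nat) :
  symmetric e -> irreflexive e -> (forall p q, connect e p q) ->
  (1 < #|V|)%N -> (3 <= M)%N ->
  (forall p, (gamma 0%N p < M)%N) ->
  execution e M gamma S -> fair S ->
  WU0 e M (gamma 0%N) -> delta_spec e M (gamma 0%N) delta0 ->
  (forall q, 0 <= delta0 p0 q) ->
  is_diameter e D ->
  forall k : int, (gamma 0%N p0)%:Z + D%:Z <= k ->
  exists C : V -> nat,
    (forall p,
       lifted_clock S (fun q => (gamma 0%N p0)%:Z + delta0 p0 q) (C p) p = k /\
       (forall t, lifted_clock S (fun q => (gamma 0%N p0)%:Z + delta0 p0 q) t p = k ->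
                  (C p <= t)%N)) /\
    is_cut S C /\ coherent e S C.
Proof.
move=> e_sym _ e_conn _ M_ge3 _ exec fairS _ delta_ok _ diam k k_ge.
set base : V -> int := fun q => (gamma 0%N p0)%:Z + delta0 p0 q.
have M_gt0 : (0 < M)%N by apply: leq_trans M_ge3.
have lift0 : lifts M gamma S base 0.
  move=> p; rewrite /= /base.
  have -> : (gamma 0%N p0)%:Z + delta0 p0 p - (gamma 0%N p)%:Z
            = delta0 p0 p - ((gamma 0%N p)%:Z - (gamma 0%N p0)%:Z) by ring.
  exact (dvdz_delta delta_ok (e_conn p0 p)).
have smooth0 : smooth e S base 0.
  by move=> p q pq; rewrite /= /base -addrA lerD2l (delta_edge M_gt0 delta_ok (e_conn p0 p)).
have smooth_all := smooth_invariant M_ge3 e_sym exec lift0 smooth0.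
have reach p : exists t, lifted_clock S base t p = k.
  apply: (lifted_clock_reaches fairS); apply: le_trans k_ge; rewrite /= /base lerD2l.
  exact (delta_le_diameter M_gt0 delta_ok diam (e_conn p0 p)).
have [C hit] := first_hit_exists reach.
exists C; split; first exact hit.
by split; [exact (first_hit_cut hit) | exact (first_hit_coherent smooth_all hit)].
Qed.
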